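(* The (unique up to isomorphism) Steiner quadruple system $\mathrm{SQS}(8)$ admits a zero-sum $3$-flow, and the (unique up to isomorphism) Steiner quadruple system $\mathrm{SQS}(10)$ admits a zero-sum $2$-flow.
   Context: A Steiner quadruple system $\mathrm{SQS}(v)$ is a pair $(X,\mathcal{B})$ with $|X|=v$ and $\mathcal{B}$ a collection of 4-subsets of $X$ such that every 3-subset lies in exactly one block. For integer $n\ge2$, a zero-sum $n$-flow of $(X,\mathcal{B})$ is a map $f:\mathcal{B}\to\{\pm1,\ldots,\pm(n-1)\}$ with $\sum_{B\ni x} f(B)=0$ for every $x\in X$. *)

From mathcomp Require Import all_boot all_order all_algebra.
Set Implicit Arguments. Unset Strict Implicit. Unset Printing Implicit Defensive.
Import Order.TTheory GRing.Theory Num.Theory.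

Definition is_SQS (X : finType) (B : {set {set X}}) : Prop :=
  (forall b, b \in B -> #|b| = 4%N) /\
  (forall T : {set X}, #|T| = 3%N -> #|[set b in B | T \subset b]| = 1%N).

Definition zero_sum_flow (n : nat) (X : finType) (B : {set {set X}})
    (f : {set X} -> int) : Prop :=
  (forall b, b \in B -> (f b != 0)%R /\ (`|f b| < n)%N) /\
  (forall x : X, (\sum_(b in B | x \in b) f b)%R = 0%R).

Definition has_zero_sum_flow (n : nat) (X : finType) (B : {set {set X}}) : Prop :=
  exists f : {set X} -> int, zero_sum_flow n B f.

From mathcomp Require Import all_boot all_order all_algebra perm zify.
Set Implicit Arguments. Unset Strict Implicit. Unset Printing Implicit Defensive.

(* Having a zero-sum n-flow is invariant under relabelling the points, so it
   suffices to treat Steiner quadruple systems on the point set 'I_v.  Such a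
   system B is reconstructed block by block: the lexicographically least
   triple {a, b, c} not covered by the blocks found so far lies in a unique
   block {a, b, c, y} of B.  The search [search] branches over the possible
   fourth points y; among the points used by no block found so far it only
   tries the least one, since a transposition of two unused points fixes those
   blocks and may thus be applied to B.  When every triple is covered, the
   blocks found are all the blocks of B; an untrusted backtracking oracle then
   proposes block weights, which the boolean checker [flow_certificate]
   verifies to form a zero-sum n-flow. *)

Definition relabel (X Y : finType) (g : Y -> X) (b : {set X}) : {set Y} :=
  g @^-1: b.

Section Relabelling.
Variables (X Y : finType) (h : X -> Y) (g : Y -> X).
Hypotheses (hK : cancel h g) (gK : cancel g h).

Lemma relabelK : cancel (relabel g) (relabel h).
Proof. by move=> b; apply/setP => x; rewrite !inE hK. Qed.

Lemma relabelKV : cancel (relabel h) (relabel g).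
Proof. by move=> b; apply/setP => y; rewrite !inE gK. Qed.

Lemma card_relabel (b : {set X}) : #|relabel g b| = #|b|.
Proof.
by rewrite /relabel -(can2_imset_pre _ hK gK) card_imset //; apply: can_inj hK.
Qed.

Lemma mem_relabel_design (B : {set {set X}}) (b : {set Y}) :
  (b \in relabel g @: B) = (relabel h b \in B).
Proof. by rewrite -{1}(relabelKV b) mem_imset //; apply: can_inj relabelK. Qed.

Lemma subset_relabel (T : {set Y}) (b : {set X}) :
  (T \subset relabel g b) = (relabel h T \subset b).
Proof.
apply/subsetP/subsetP => sub x; rewrite !inE; first by move=> /sub; rewrite inE hK.
by move=> xT; apply: sub; rewrite inE gK.
Qed.

Lemma relabel_SQS (B : {set {set X}}) : is_SQS B -> is_SQS (relabel g @: B).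
Proof.
case=> B4 B3; split => [_ /imsetP[b bB ->]|T T3]; first by rewrite card_relabel B4.
have -> : [set b in relabel g @: B | T \subset b] =
          relabel g @: [set b in B | relabel h T \subset b].
  apply/setP => b; rewrite inE mem_relabel_design mem_relabel_design inE.
  by congr (_ && _); rewrite -{1}(relabelKV b) subset_relabel.
rewrite card_imset; last exact: can_inj relabelK.
by apply: B3; rewrite -T3 -(card_relabel (relabel h T)) relabelKV.
Qed.

Lemma relabel_flow n (B : {set {set X}}) :
  has_zero_sum_flow n (relabel g @: B) -> has_zero_sum_flow n B.
Proof.
case=> f [f_val f_sum]; exists (f \o relabel g); split => [b bB|x].
  by apply: f_val; apply: imset_f.
apply: etrans (f_sum (h x)); symmetry; rewrite (reindex (relabel g)); last first.
  by exists (relabel h) => b _; [apply: relabelK | apply: relabelKV].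
by apply: eq_bigl => b; rewrite mem_relabel_design relabelK !inE hK.
Qed.

End Relabelling.

Lemma flow_by_ordinals (X : finType) (v n : nat) :
  #|X| = v -> (forall B : {set {set 'I_v}}, is_SQS B -> has_zero_sum_flow n B) ->
  forall B : {set {set X}}, is_SQS B -> has_zero_sum_flow n B.
Proof.
move=> cardX flow_ord B sqsB.
pose h (x : X) : 'I_v := cast_ord cardX (enum_rank x).
pose g (i : 'I_v) : X := enum_val (cast_ord (esym cardX) i).
have hK : cancel h g by move=> x; rewrite /g /h cast_ordK enum_rankK.
have gK : cancel g h by move=> i; rewrite /g /h enum_valK cast_ordKV.
by apply: (relabel_flow hK gK); apply/flow_ord/(relabel_SQS hK gK).
Qed.

Lemma SQS_block_unique (X : finType) (B : {set {set X}}) (T b1 b2 : {set X}) :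
  is_SQS B -> #|T| = 3 -> b1 \in B -> b2 \in B -> T \subset b1 -> T \subset b2 ->
  b1 = b2.
Proof.
case=> _ B3 /B3 /eqP /cards1P [b0 Eb] b1B b2B Tb1 Tb2.
have : b1 \in [set b in B | T \subset b] by rewrite inE b1B.
have : b2 \in [set b in B | T \subset b] by rewrite inE b2B.
by rewrite Eb !inE => /eqP -> /eqP ->.
Qed.

Lemma SQS_block_through (X : finType) (B : {set {set X}}) (T : {set X}) :
  is_SQS B -> #|T| = 3 -> exists2 b, b \in B & T \subset b.
Proof.
case=> _ B3 /B3 /eqP /cards1P [b0 Eb].
have : b0 \in [set b in B | T \subset b] by rewrite Eb set11.
by rewrite inE => /andP[]; exists b0.
Qed.

Definition pts (v : nat) (k : seq nat) : {set 'I_v} := [set i : 'I_v | val i \in k].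

Lemma ptsE v k (i : 'I_v) : (i \in pts v k) = (val i \in k).
Proof. by rewrite inE. Qed.

Lemma card_pts v k : uniq k -> all (fun x => x < v) k -> #|pts v k| = size k.
Proof.
elim: k => [|x k IH] /=; first by move=> _ _; apply: eq_card0 => i; rewrite inE.
case/andP=> xk uk /andP[xv kv].
have -> : pts v (x :: k) = Ordinal xv |: pts v k by apply/setP=> i; rewrite !inE.
by rewrite cardsU1 IH // ptsE /= xk.
Qed.

Lemma pts_sub v k1 k2 : {subset k1 <= k2} -> pts v k1 \subset pts v k2.
Proof. by move=> sub; apply/subsetP => i; rewrite !ptsE => /sub. Qed.

(* In the search, blocks are lists of natural numbers, coding sets of points
   through [pts].  The list cs covers the triple {a, b, c} when some block of
   cs contains the three points. *)
Definition covered (cs : seq (seq nat)) (a b c : nat) : bool :=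
  has (fun k => [&& a \in k, b \in k & c \in k]) cs.

Definition triples (v : nat) : seq (nat * nat * nat) :=
  [seq t <- [seq (p, c) | p <- [seq (a, b) | a <- iota 0 v, b <- iota 0 v],
                          c <- iota 0 v]
     | (t.1.1 < t.1.2 < t.2)%N].

Definition first_uncovered (v : nat) (cs : seq (seq nat)) : option (nat * nat * nat) :=
  ohead [seq t <- triples v | ~~ covered cs t.1.1 t.1.2 t.2].

Definition used (cs : seq (seq nat)) (y : nat) : bool := has (fun k => y \in k) cs.

Definition fresh_point (v : nat) (cs : seq (seq nat)) (T : seq nat) : nat :=
  head v [seq y <- iota 0 v | ~~ used cs y & y \notin T].

Definition candidate (cs : seq (seq nat)) (a b c t y : nat) : bool :=
  [&& y \notin [:: a; b; c], used cs y || (y == t), ~~ covered cs a b y,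
      ~~ covered cs a c y & ~~ covered cs b c y].

(* The untrusted flow oracle: a backtracking search assigning to the blocks of
   cs values from ws.  It keeps, for each point, its load (the total value of
   its assigned blocks) and its degree (the number of its unassigned blocks),
   and prunes when a load exceeds bound times the degree in absolute value. *)
Definition add_on (k : seq nat) (w : int) (load : seq int) : seq int :=
  mkseq (fun i => if i \in k then (nth 0 load i + w)%R else nth 0%R load i) (size load).

Definition dec_on (k : seq nat) (deg : seq nat) : seq nat :=
  mkseq (fun i => if i \in k then (nth 0 deg i).-1 else nth 0 deg i) (size deg).

Fixpoint assign (bound : nat) (ws : seq int) (cs : seq (seq nat))
    (load : seq int) (deg : seq nat) : option (seq int) :=
  match cs with
  | [::] => if all (fun z => z == 0%R) load then Some [::] else None
  | k :: cs' =>
    let deg' := dec_on k deg in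
    let fix try ws' := match ws' with
      | [::] => None
      | w :: ws'' =>
        let load' := add_on k w load in
        if all (fun i => absz (nth 0%R load' i) <= bound * nth 0 deg' i) k then
          if assign bound ws cs' load' deg' is Some l then Some (w :: l) else try ws''
        else try ws'' end
    in try ws
  end.

(* Blocks are assigned in the order they were found, so that the blocks
   through a given point tend to be consecutive. *)
Definition flow_oracle (v n : nat) (cs : seq (seq nat)) : option (seq int) :=
  let weights := flatten [seq [:: Posz i; (- Posz i)%R] | i <- iota 1 n.-1] in
  let deg := [seq count (fun k => x \in k) cs | x <- iota 0 v] in
  omap rev (assign n.-1 weights (rev cs) (nseq v 0%R) deg).

Definition point_load (x : nat) (wcs : seq (seq nat * int)) : int :=
  foldr (fun p s => if x \in p.1 then (p.2 + s)%R else s) 0%R wcs.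

Definition flow_certificate (v n : nat) (cs : seq (seq nat)) (ws : seq int) : bool :=
  [&& size ws == size cs, all (fun w => (w != 0%R) && (`|w| < n)) ws
    & all (fun x => point_load x (zip cs ws) == 0%R) (iota 0 v)].

Fixpoint search (v n fuel : nat) (cs : seq (seq nat)) : bool :=
  if fuel is fuel'.+1 then
    if first_uncovered v cs is Some (a, b, c) then
      let t := fresh_point v cs [:: a; b; c] in
      all (fun y => if candidate cs a b c t y
                    then search v n fuel' ([:: a; b; c; y] :: cs) else true)
        (iota 0 v)
    else if flow_oracle v n cs is Some ws then flow_certificate v n cs ws else false
  else false.

Definition search_all (v n : nat) : bool := search v n (size (triples v)).+1 [::].

Lemma mem_triples v a b c : ((a, b, c) \in triples v) = [&& a < b, b < c & c < v].
Proof.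
have mem_grid : ((a, b, c) \in [seq (p, c) | p <- [seq (a, b) | a <- iota 0 v,
                   b <- iota 0 v], c <- iota 0 v]) = [&& a < v, b < v & c < v].
  apply/allpairsP/and3P => [[[p c'] /= [/allpairsP[[a' b'] /= [ai bi ->]] ci [-> -> ->]]]|].
    by move: ai bi ci; rewrite !mem_iota.
  move=> [av bv cv]; exists ((a, b), c); rewrite mem_iota cv; split=> //.
  by apply/allpairsP; exists (a, b); rewrite !mem_iota av bv.
rewrite mem_filter mem_grid /=; apply/idP/idP; lia.
Qed.

Lemma first_uncovered_None v cs : first_uncovered v cs = None ->
  forall t, t \in triples v -> covered cs t.1.1 t.1.2 t.2.
Proof.
rewrite /first_uncovered; case E: [seq _ <- _ | _] => [|//] _ t tv.
apply/negPn/negP => nc.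
by have : t \in [seq t <- triples v | ~~ covered cs t.1.1 t.1.2 t.2];
  [rewrite mem_filter nc | rewrite E].
Qed.

Lemma first_uncovered_Some v cs a b c : first_uncovered v cs = Some (a, b, c) ->
  [&& a < b, b < c & c < v] && ~~ covered cs a b c.
Proof.
rewrite /first_uncovered; case E: [seq _ <- _ | _] => [//|t ts] [et].
by have := mem_head t ts; rewrite -E mem_filter et mem_triples andbC.
Qed.

Lemma pts_inj_mem v k1 k2 x : pts v k1 = pts v k2 -> x < v -> (x \in k1) = (x \in k2).
Proof. by move=> e xv; rewrite -[x]/(val (Ordinal xv)) -!ptsE e. Qed.

Definition partial_code (v : nat) (B : {set {set 'I_v}}) (cs : seq (seq nat)) : bool :=
  all (fun k => pts v k \in B) cs && uniq [seq pts v k | k <- cs].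

Lemma covering_code v (B : {set {set 'I_v}}) cs k a b c bl :
  is_SQS B -> partial_code B cs -> k \in cs -> [&& a \in k, b \in k & c \in k] ->
  uniq [:: a; b; c] -> all (fun x => x < v) [:: a; b; c] ->
  bl \in B -> pts v [:: a; b; c] \subset bl -> pts v k = bl.
Proof.
move=> sqsB /andP[/allP codesB _] kcs abck uabc abcv blB sub.
apply: (SQS_block_unique sqsB (card_pts uabc abcv)) => //; first exact: codesB.
by apply: pts_sub => x; rewrite !inE => /or3P[]/eqP->; case/and3P: abck.
Qed.

Lemma blocks_listed v (B : {set {set 'I_v}}) cs :
  is_SQS B -> partial_code B cs ->
  (forall t, t \in triples v -> covered cs t.1.1 t.1.2 t.2) ->
  forall bl, bl \in B -> bl \in [seq pts v k | k <- cs].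
Proof.
move=> sqsB code cov bl blB.
set s := sort leq [seq val i | i <- enum bl].
have s_bl i : (val i \in s) = (i \in bl) by rewrite mem_sort (mem_map val_inj) mem_enum.
have s_v x : x \in s -> x < v by rewrite mem_sort => /mapP[i _ ->]; apply: ltn_ord.
have : size s = 4 by rewrite size_sort size_map -cardE sqsB.1.
have : sorted ltn s.
  by rewrite ltn_sorted_uniq_leq sort_uniq (map_inj_uniq val_inj) enum_uniq sort_sorted.
case Es: s => [|a [|b [|c [|d []]]]] //= /and4P[ab bc _ _] _.
have [av bv cv] : [/\ a < v, b < v & c < v] by split; apply: s_v; rewrite Es !inE eqxx ?orbT.
have /hasP[k kcs abck] : covered cs a b c.
  by apply: (cov (a, b, c)); rewrite mem_triples ab bc cv.
apply/mapP; exists k => //; symmetry; apply: (covering_code sqsB code kcs abck) => //=.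
- by rewrite !inE; apply/and3P; split; lia.
- by rewrite av bv cv.
- by apply/subsetP => i; rewrite ptsE -s_bl Es !inE => /or3P[] ->; rewrite ?orbT.
Qed.

Lemma point_loadE x (wcs : seq (seq nat * int)) :
  point_load x wcs = (\sum_(p <- wcs | x \in p.1) p.2)%R.
Proof. by elim: wcs => [|p wcs IH]; rewrite ?big_nil // big_cons -IH. Qed.

Lemma lookup_table (T K U : eqType) (u0 : U) (key : T -> K)
    (s : seq (T * U)) (p : T * U) :
  uniq [seq key q.1 | q <- s] -> p \in s ->
  nth u0 [seq q.2 | q <- s] (index (key p.1) [seq key q.1 | q <- s]) = p.2.
Proof.
move=> ukeys ps; have lt_ps : index p s < size s by rewrite index_mem.
have -> : key p.1 = nth (key p.1) [seq key q.1 | q <- s] (index p s).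
  by rewrite (nth_map p) // nth_index.
by rewrite index_uniq ?size_map // (nth_map p) // nth_index.
Qed.

Lemma certificate_flow v n (B : {set {set 'I_v}}) cs ws :
  (forall bl, (bl \in B) = (bl \in [seq pts v k | k <- cs])) ->
  uniq [seq pts v k | k <- cs] -> flow_certificate v n cs ws ->
  has_zero_sum_flow n B.
Proof.
move=> Bcs ucs /and3P[/eqP size_ws ws_ok loads0].
set s := zip cs ws.
have keys : [seq pts v q.1 | q <- s] = [seq pts v k | k <- cs].
  by rewrite -[LHS]/(map (pts v \o fst) s) map_comp -/(unzip1 s) unzip1_zip ?size_ws.
have vals : [seq q.2 | q <- s] = ws by rewrite -/(unzip2 s) unzip2_zip ?size_ws.
pose f bl := nth 0%R ws (index bl [seq pts v k | k <- cs]).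
have fE p : p \in s -> f (pts v p.1) = p.2.
  by move=> ps; rewrite /f -keys -vals lookup_table // keys.
exists f; split => [bl|x].
  rewrite Bcs -keys => /mapP[p ps ->]; rewrite fE //.
  have : p.2 \in ws by rewrite -vals map_f.
  by move/(allP ws_ok)/andP.
rewrite (eq_bigl (fun bl => (bl \in [seq pts v q.1 | q <- s]) && (x \in bl))); last first.
  by move=> bl; rewrite Bcs keys.
rewrite big_mkcondr -big_uniq; last by rewrite keys.
rewrite -big_mkcond big_map; transitivity (point_load (val x) s); last first.
  by apply/eqP/(allP loads0); rewrite mem_iota ltn_ord.
rewrite point_loadE big_seq_cond [RHS]big_seq_cond.
by apply: eq_big => [p|p /andP[ps _]]; [rewrite ptsE | apply: fE].
Qed.

Lemma block_through_triple v (B : {set {set 'I_v}}) a b c :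
  is_SQS B -> [&& a < b, b < c & c < v] ->
  exists2 y : 'I_v, val y \notin [:: a; b; c] & pts v [:: a; b; c; val y] \in B.
Proof.
move=> sqsB abc; set T := pts v [:: a; b; c].
have T3 : #|T| = 3 by rewrite card_pts //= ?inE; lia.
have [bl blB Tbl] := SQS_block_through sqsB T3.
have /cards1P[y Ey] : #|bl :\: T| == 1.
  by rewrite cardsD (setIidPr Tbl) sqsB.1 // T3.
have : y \in bl :\: T by rewrite Ey set11.
rewrite inE ptsE => /andP[yT ybl]; exists y => //.
suff -> : pts v [:: a; b; c; val y] = bl by [].
have bl_split : bl = T :|: (bl :\: T).
  apply/setP => i; rewrite in_setU in_setD.
  by case: (boolP (i \in T)) => [/(subsetP Tbl) ->|].
by apply/setP => i; rewrite bl_split Ey !inE val_eqE !orbA.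
Qed.

Lemma fourth_point_uncovered v (B : {set {set 'I_v}}) cs a b c y p q :
  is_SQS B -> partial_code B cs -> ~~ covered cs a b c -> [&& a < b, b < c & c < v] ->
  y < v -> y \notin [:: a; b; c] -> pts v [:: a; b; c; y] \in B ->
  p \in [:: a; b; c] -> q \in [:: a; b; c] -> p != q -> ~~ covered cs p q y.
Proof.
move=> sqsB code abc_unc abc yv y_new blB pT qT pq.
apply: contra abc_unc => /hasP[k kcs pqyk]; apply/hasP; exists k => //.
have e : pts v k = pts v [:: a; b; c; y].
  apply: (covering_code sqsB code kcs pqyk) => //=.
  - by move: pT qT pq y_new; rewrite !inE; lia.
  - by move: pT qT; rewrite !inE; lia.
  - by apply: pts_sub => x; move: pT qT; rewrite !inE; lia.
by rewrite !(pts_inj_mem e) ?inE ?eqxx ?orbT //; lia.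
Qed.

Lemma extend_code v (B : {set {set 'I_v}}) cs a b c y :
  partial_code B cs -> ~~ covered cs a b c -> [&& a < b, b < c & c < v] ->
  pts v [:: a; b; c; y] \in B -> partial_code B ([:: a; b; c; y] :: cs).
Proof.
move=> /andP[codesB ucs] abc_unc abc blB; rewrite /partial_code /= blB codesB ucs /= andbT.
apply: contra abc_unc => /mapP[k kcs e]; apply/hasP; exists k => //.
by rewrite -!(pts_inj_mem e) ?inE ?eqxx ?orbT //; lia.
Qed.

Lemma fresh_pointP v cs T (y : 'I_v) :
  ~~ used cs (val y) -> val y \notin T ->
  [&& fresh_point v cs T < v, ~~ used cs (fresh_point v cs T) & fresh_point v cs T \notin T].
Proof.
move=> y_unused y_new; rewrite /fresh_point.
have : val y \in [seq x <- iota 0 v | ~~ used cs x & x \notin T].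
  by rewrite mem_filter y_unused y_new mem_iota /=.
case E: [seq x <- _ | _] => [//|t ts] _ /=.
have : t \in [seq x <- iota 0 v | ~~ used cs x & x \notin T] by rewrite E mem_head.
by rewrite mem_filter mem_iota /= => /andP[/andP[-> ->] ->].
Qed.

Lemma mem_relabel_swap v (y t i : 'I_v) (bl : {set 'I_v}) :
  (i \in relabel (tperm y t) bl) = (tperm y t i \in bl).
Proof. by rewrite inE. Qed.

Lemma swap_fixes v (y t : 'I_v) k :
  val y \notin k -> val t \notin k -> relabel (tperm y t) (pts v k) = pts v k.
Proof.
move=> yk tk; apply/setP => i; rewrite mem_relabel_swap !ptsE.
by case: tpermP => [->|->|] //; rewrite (negbTE yk) (negbTE tk).
Qed.

Lemma swap_moves v (y t : 'I_v) a b c :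
  val y \notin [:: a; b; c] -> val t \notin [:: a; b; c] ->
  relabel (tperm y t) (pts v [:: a; b; c; val y]) = pts v [:: a; b; c; val t].
Proof.
move=> y_new t_new; apply/setP => i; rewrite mem_relabel_swap !ptsE.
have mem4 x z : (x \in [:: a; b; c; z]) = (x \in [:: a; b; c]) || (x == z).
  by rewrite !inE !orbA.
case: tpermP => [->|->|/eqP/negbTE iy /eqP/negbTE it];
  rewrite !mem4 ?(negbTE y_new) ?(negbTE t_new) ?eqxx //=.
by rewrite !val_eqE iy it.
Qed.

Lemma swap_to_fresh v (B : {set {set 'I_v}}) cs a b c (y t : 'I_v) :
  is_SQS B -> partial_code B cs -> ~~ used cs (val y) -> ~~ used cs (val t) ->
  val y \notin [:: a; b; c] -> val t \notin [:: a; b; c] ->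
  pts v [:: a; b; c; val y] \in B ->
  exists B' : {set {set 'I_v}}, [/\ is_SQS B', partial_code B' cs,
    pts v [:: a; b; c; val t] \in B' &
    forall n, has_zero_sum_flow n B' -> has_zero_sum_flow n B].
Proof.
move=> sqsB /andP[/allP codesB ucs] /hasPn y_unused /hasPn t_unused y_new t_new blB.
have swapK := tpermK y t; exists (relabel (tperm y t) @: B); split.
- exact: relabel_SQS.
- rewrite /partial_code ucs andbT; apply/allP => k kcs.
  by rewrite -(@swap_fixes v y t k) ?y_unused ?t_unused ?imset_f ?codesB.
- by rewrite -(swap_moves y_new t_new) imset_f.
- by move=> n; apply: relabel_flow.
Qed.

Lemma search_sound v n fuel : forall (B : {set {set 'I_v}}) cs,
  is_SQS B -> partial_code B cs -> search v n fuel cs -> has_zero_sum_flow n B.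
Proof.
elim: fuel => [//|fuel IH] B cs sqsB code /=.
case E: (first_uncovered v cs) => [[[a b] c]|]; last first.
  case: flow_oracle => [ws|//]; apply: certificate_flow; last by case/andP: code.
  move=> bl; apply/idP/idP => [|/mapP[k kcs ->]].
    exact: (blocks_listed sqsB code (first_uncovered_None E)).
  by case/andP: code => /allP/(_ k kcs).
case/andP: (first_uncovered_Some E) => abc abc_unc.
set t := fresh_point v cs [:: a; b; c] => /allP branches.
have branch (B' : {set {set 'I_v}}) y : is_SQS B' -> partial_code B' cs -> y < v ->
    pts v [:: a; b; c; y] \in B' -> candidate cs a b c t y -> has_zero_sum_flow n B'.
  move=> sqsB' code' yv blB' cand; apply: (IH B' ([:: a; b; c; y] :: cs) sqsB').
    exact: extend_code.
  by have := branches y; rewrite mem_iota /= yv cand; apply.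
have [y y_new blB] := block_through_triple sqsB abc.
case: (boolP (used cs (val y) || (val y == t))) => [y_ok|].
  apply: (branch B (val y) sqsB code (ltn_ord y) blB); rewrite /candidate y_new y_ok.
  by rewrite !(fourth_point_uncovered sqsB code abc_unc abc (ltn_ord y) y_new blB)
    ?inE ?eqxx ?orbT //; lia.
rewrite negb_or => /andP[y_unused _].
have /and3P[tv t_unused t_new] := fresh_pointP y_unused y_new.
rewrite -/t in tv t_unused t_new.
have [B' [sqsB' code' blB' pullback]] :=
  @swap_to_fresh v B cs a b c y (Ordinal tv) sqsB code y_unused t_unused y_new t_new blB.
apply/pullback/(branch B' t sqsB' code' tv blB').
have t_uncov p q : ~~ covered cs p q t.
  by apply: contra t_unused => /hasP[k kcs /and3P[_ _ tk]]; apply/hasP; exists k.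
by rewrite /candidate t_new eqxx orbT !t_uncov.
Qed.

Lemma search_all_sound v n : search_all v n ->
  forall B : {set {set 'I_v}}, is_SQS B -> has_zero_sum_flow n B.
Proof. by move=> ok B sqsB; apply: (search_sound sqsB _ ok). Qed.

Lemma search_8_3 : search_all 8 3.
Proof. by vm_compute. Qed.

Lemma search_10_2 : search_all 10 2.
Proof. by vm_compute. Qed.

Theorem mainTheorem13 :
  (forall (X : finType) (B : {set {set X}}),
      #|X| = 8%N -> is_SQS B -> has_zero_sum_flow 3 B) /\
  (forall (X : finType) (B : {set {set X}}),
      #|X| = 10%N -> is_SQS B -> has_zero_sum_flow 2 B).
Proof.
split=> X B cardX.
  exact: flow_by_ordinals cardX (search_all_sound search_8_3) B.
exact: flow_by_ordinals cardX (search_all_sound search_10_2) B.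
Qed.
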